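(* Any $(M,d_s,d_x,\epsilon)$ code must satisfy \[\epsilon\ge\sup_{P_{\bar X|\bar Z\bar Y}}\ \sup_{\gamma\ge0}\Big\{\mathbb E\Big[\inf_{z\in\widehat{\mathcal S},\,y\in\widehat{\mathcal X}}\mathbb P\big[f_{\bar X|\bar Z\bar Y}(S,X,z,y)\ge\gamma\mid X\big]\Big]-\exp(-\gamma)\Big\},\] where $(S,X)\sim P_{SX}$, the first supremum is over conditional distributions $P_{\bar X|\bar Z\bar Y}:\widehat{\mathcal S}\times\widehat{\mathcal X}\to\mathcal X$ such that the Radon–Nikodym derivative of $P_{\bar X|\bar Z=z,\bar Y=y}$ with respect to $P_X$ at $x$ exists for every $z\in\widehat{\mathcal S}$, $y\in\widehat{\mathcal X}$ and $P_X$-a.e. $x$, and \[f_{\bar X|\bar Z\bar Y}(s,x,z,y)=\log\frac{\mathrm dP_{\bar X|\bar Z=z,\bar Y=y}}{\mathrm dP_X}(x)+\sup_{\lambda_s\ge0}\lambda_s(\mathsf d_s(s,z)-d_s)+\sup_{\lambda_x\ge0}\lambda_x(\mathsf d_x(x,y)-d_x)-\log M.\]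
   Context: Let $\mathcal S,\mathcal X,\widehat{\mathcal S},\widehat{\mathcal X}$ be finite sets, $P_{SX}$ a distribution on $\mathcal S\times\mathcal X$, and $\mathsf d_s:\mathcal S\times\widehat{\mathcal S}\to[0,\infty)$, $\mathsf d_x:\mathcal X\times\widehat{\mathcal X}\to[0,\infty)$ distortion measures; fix $d_s,d_x\ge0$. An $(M,d_s,d_x,\epsilon)$ code is a random encoder $P_{U|X}:\mathcal X\to\{1,\dots,M\}$ and a random decoder $P_{ZY|U}:\{1,\dots,M\}\to\widehat{\mathcal S}\times\widehat{\mathcal X}$ (so $S-X-U-(Z,Y)$) such that $\mathbb P[\mathsf d_s(S,Z)>d_s\text{ or }\mathsf d_x(X,Y)>d_x]\le\epsilon$. $\log$ and $\exp$ are to a common base. *)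

From HB Require Import structures.
From mathcomp Require Import all_boot all_order all_algebra.
From mathcomp Require Import all_classical all_reals all_analysis.
Set Implicit Arguments. Unset Strict Implicit. Unset Printing Implicit Defensive.
Import Order.TTheory GRing.Theory Num.Theory.
Local Open Scope classical_set_scope.
Local Open Scope ring_scope.

Definition stochastic (R : realType) (A B : finType) (W : A -> B -> R) : Prop :=
  (forall a b, 0 <= W a b) /\ (forall a, \sum_(b : B) W a b = 1).

Definition is_dist2 (R : realType) (S X : finType) (P : S -> X -> R) : Prop :=
  (forall s x, 0 <= P s x) /\ \sum_(s : S) \sum_(x : X) P s x = 1.

Definition marg (R : realType) (S X : finType) (P : S -> X -> R) (x : X) : R :=
  \sum_(s : S) P s x.

(* An (M, d_s, d_x, eps) code: random encoder W = P_{U|X} : X -> {1..M}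
   (represented by 'I_M) and random decoder D = P_{ZY|U}, with excess
   distortion probability at most eps. *)
Definition is_code (R : realType) (S X Sh Xh : finType) (P : S -> X -> R)
  (dS : S -> Sh -> R) (dX : X -> Xh -> R) (M : nat) (ds dx eps : R)
  (W : X -> 'I_M -> R) (D : 'I_M -> Sh * Xh -> R) : Prop :=
  stochastic W /\ stochastic D /\
  \sum_(s : S) \sum_(x : X) \sum_(u : 'I_M) \sum_(zy : Sh * Xh)
     P s x * W x u * D u zy *
       (if (dS s zy.1 > ds) || (dX x zy.2 > dx) then 1 else 0) <= eps.

Definition elogb (R : realType) (b t : R) : \bar R :=
  if 0 < t then (ln t / ln b)%:E else -oo%E.

(* Sum in \bar R where +oo absorbs (so (-oo) + (+oo) = +oo); this is the
   convention used for f when an excess distortion gives an infinite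
   penalty term. *)
Definition addpinf (R : realType) (a b : \bar R) : \bar R :=
  if (a == +oo%E) || (b == +oo%E) then +oo%E else (a + b)%E.

Definition suplam (R : realType) (t : R) : \bar R :=
  ereal_sup [set (l * t)%:E | l in [set l : R | 0 <= l]].

(* f_{Xbar|Zbar Ybar}(s, x, z, y); Q = P_{Xbar|Zbar Ybar}, density
   dQ/dP_X (x) = Q z y x / P_X x (on the support of P_X). *)
Definition finfo (R : realType) (S X Sh Xh : finType) (b : R) (P : S -> X -> R)
  (dS : S -> Sh -> R) (dX : X -> Xh -> R) (M : nat) (ds dx : R)
  (Q : Sh * Xh -> X -> R) (s : S) (x : X) (z : Sh) (y : Xh) : \bar R :=
  addpinf (addpinf (elogb b (Q (z, y) x / marg P x))
                   (suplam (dS s z - ds)))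
          (addpinf (suplam (dX x y - dx)) (- (ln M%:R / ln b)%:E)%E).

Definition condprob (R : realType) (S X Sh Xh : finType) (b : R) (P : S -> X -> R)
  (dS : S -> Sh -> R) (dX : X -> Xh -> R) (M : nat) (ds dx : R)
  (Q : Sh * Xh -> X -> R) (gamma : R) (x : X) (z : Sh) (y : Xh) : R :=
  (\sum_(s : S) P s x *
      (if (gamma%:E <= finfo b P dS dX M ds dx Q s x z y)%E then 1 else 0))
  / marg P x.
Arguments is_code {R S X Sh Xh} P dS dX M ds dx eps W D.

From HB Require Import structures.
From mathcomp Require Import all_boot all_order all_algebra.
From mathcomp Require Import all_classical all_reals all_analysis.
From mathcomp Require Import ring lra.
Set Implicit Arguments.
Unset Strict Implicit.
Import Order.TTheory GRing.Theory Num.Theory.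
Local Open Scope classical_set_scope.
Local Open Scope ring_scope.

(** If [f(s, x, z, y) >= gamma], then either [(z, y)] is in excess distortion
    for [(s, x)], or [Q (z, y) x >= M b^gamma P_X(x)].  Average over the joint
    law of [(S, X, U, (Z, Y))] induced by the code, evaluating the infimum over
    [(z, y)] at the decoder output: the first event has probability at most
    [eps]; for the second, bounding the encoder probabilities by [1] leaves
    [sum_u sum_(z,y) sum_x D u (z, y) Q (z, y) x / (M b^gamma) = b^-gamma]. *)

Lemma stochastic_card_gt0 (R : realType) (A B : finType) (W : A -> B -> R) :
  A -> stochastic W -> (0 < #|B|)%N.
Proof.
move=> a [_ W1]; rewrite lt0n; apply/negP => /eqP /card0_eq B0.
by move: (W1 a); rewrite big_pred0 // => /eqP; rewrite eq_sym oner_eq0.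
Qed.

Section ErealInfImage.
Variables (R : realType) (I : Type) (f : I -> R) (r : R).
Hypothesis f_ge : forall i, r <= f i.

Let inf_f := ereal_inf [set (f i)%:E | i in [set: I]].

Lemma ereal_inf_EFin_image_fin_num (i : I) : inf_f \is a fin_num.
Proof.
rewrite fin_numE; apply/andP; split.
- rewrite gt_eqF // (@lt_le_trans _ _ r%:E) ?ltNyr //.
  by apply/ereal_infP => _ [j _ <-]; rewrite lee_fin.
- rewrite lt_eqF // (@le_lt_trans _ _ (f i)%:E) ?ltry //.
  by apply: ereal_inf_lbound; exists i.
Qed.

Lemma fine_ereal_inf_EFin_image_le (i : I) : fine inf_f <= f i.
Proof.
rewrite -lee_fin fineK; last exact: ereal_inf_EFin_image_fin_num i.
by apply: ereal_inf_lbound; exists i.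
Qed.

End ErealInfImage.

Lemma suplam_le0 (R : realType) (t : R) : t <= 0 -> suplam t = 0%E.
Proof.
move=> t_le0; apply/eqP; rewrite eq_le; apply/andP; split.
- by apply/ereal_supP => _ [l /= l_ge0 <-]; rewrite lee_fin mulr_ge0_le0.
- by apply: ereal_sup_ubound; exists 0; rewrite /= ?mul0r.
Qed.

Lemma elogb_neq_pinf (R : realType) (b t : R) : elogb b t != +oo%E.
Proof. by rewrite /elogb; case: ifP. Qed.

Lemma finfo_ge_excess_or_density (R : realType) (S X Sh Xh : finType) (b : R)
    (P : S -> X -> R) (dS : S -> Sh -> R) (dX : X -> Xh -> R) (M : nat)
    (ds dx : R) (Q : Sh * Xh -> X -> R) (gamma : R) s x z y :
  1 < b -> (0 < M)%N -> 0 <= marg P x ->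
  (gamma%:E <= finfo b P dS dX M ds dx Q s x z y)%E ->
  (ds < dS s z) || (dx < dX x y) || (M%:R * b `^ gamma * marg P x <= Q (z, y) x).
Proof.
move=> b_gt1 M_gt0 PX_ge0.
case: (ltP ds (dS s z)) => //= dS_le; case: (ltP dx (dX x y)) => //= dX_le.
rewrite /finfo !suplam_le0 ?subr_le0 // /addpinf /= adde0 add0e.
rewrite !(negbTE (elogb_neq_pinf _ _)) /=.
rewrite /elogb; case: ifP => [Qx_gt0|_]; last by rewrite leeNy_eq.
have PX_gt0 : 0 < marg P x.
  rewrite lt_def PX_ge0 andbT; apply/eqP => PX0.
  by move: Qx_gt0; rewrite PX0 invr0 mulr0 ltxx.
have lnb_gt0 : 0 < ln b by rewrite ln_gt0.
have bg_gt0 : 0 < b `^ gamma by rewrite powR_gt0 ?(lt_trans ltr01 b_gt1).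
have Mr_gt0 : 0 < M%:R :> R by rewrite ltr0n.
rewrite -EFinD lee_fin -mulNr -mulrDl ler_pdivlMr // => gamma_le.
rewrite -ler_pdivlMr // -ler_ln ?posrE ?(mulr_gt0 Mr_gt0 bg_gt0) //.
by rewrite lnM ?posrE // ln_powR; lra.
Qed.

Lemma condprob_ge0 (R : realType) (S X Sh Xh : finType) (b : R)
    (P : S -> X -> R) (dS : S -> Sh -> R) (dX : X -> Xh -> R) (M : nat)
    (ds dx : R) (Q : Sh * Xh -> X -> R) (gamma : R) x z y :
  (forall s x, 0 <= P s x) -> 0 <= condprob b P dS dX M ds dx Q gamma x z y.
Proof.
move=> P_ge0; apply: divr_ge0; apply: sumr_ge0 => s _; rewrite ?mulr_ge0 //.
by case: ifP.
Qed.

Lemma ind_le_indD (R : realDomainType) (a b c : bool) : (a -> b || c) ->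
  (if a then 1 else 0) <= (if b then 1 else 0) + (if c then 1 else 0) :> R.
Proof. by case: a b c => [] [] [] /= abc; first [lra | have := abc isT]. Qed.

Section CodeExpectation.
Variables (R : realType) (S X Sh Xh : finType) (M : nat).
Variables (P : S -> X -> R) (W : X -> 'I_M -> R) (D : 'I_M -> Sh * Xh -> R).
Hypotheses (P_ge0 : forall s x, 0 <= P s x) (W_st : stochastic W) (D_st : stochastic D).

Definition Ecode (g : S -> X -> Sh * Xh -> R) : R :=
  \sum_(s : S) \sum_(x : X) \sum_(u : 'I_M) \sum_(zy : Sh * Xh)
     P s x * W x u * D u zy * g s x zy.

Lemma EcodeE g : Ecode g =
  \sum_(x : X) \sum_(u : 'I_M) \sum_(zy : Sh * Xh)
     W x u * D u zy * \sum_(s : S) P s x * g s x zy.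
Proof.
rewrite /Ecode exchange_big; apply: eq_bigr => x _.
rewrite exchange_big; apply: eq_bigr => u _.
rewrite exchange_big; apply: eq_bigr => zy _.
by rewrite big_distrr /=; apply: eq_bigr => s _; ring.
Qed.

Lemma EcodeD g1 g2 :
  Ecode (fun s x zy => g1 s x zy + g2 s x zy) = Ecode g1 + Ecode g2.
Proof.
rewrite /Ecode -big_split; apply: eq_bigr => s _.
rewrite -big_split; apply: eq_bigr => x _.
rewrite -big_split; apply: eq_bigr => u _.
by rewrite -big_split; apply: eq_bigr => zy _; rewrite mulrDr.
Qed.

Lemma ler_Ecode g1 g2 : (forall s x zy, g1 s x zy <= g2 s x zy) ->
  Ecode g1 <= Ecode g2.
Proof.
have [[W_ge0 _] [D_ge0 _]] := (W_st, D_st).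
move=> g12; do 4!(apply: ler_sum => ? _).
by rewrite ler_wpM2l ?mulr_ge0.
Qed.

Lemma sum_encoder_decoder x :
  \sum_(u : 'I_M) \sum_(zy : Sh * Xh) W x u * D u zy = 1.
Proof.
have [[_ W1] [_ D1]] := (W_st, D_st).
by rewrite -(W1 x); apply: eq_bigr => u _; rewrite -big_distrr /= D1 mulr1.
Qed.

Lemma sum_marg_le_Ecode (m : X -> R) (g : S -> X -> Sh * Xh -> R) :
  (forall s x zy, 0 <= g s x zy) ->
  (forall x zy, m x <= (\sum_(s : S) P s x * g s x zy) / marg P x) ->
  \sum_(x : X) marg P x * m x <= Ecode g.
Proof.
have [[W_ge0 _] [D_ge0 _]] := (W_st, D_st).
move=> g_ge0 m_le; rewrite EcodeE; apply: ler_sum => x _.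
rewrite -[_ * m x]mul1r -(sum_encoder_decoder x) big_distrl /=.
apply: ler_sum => u _; rewrite big_distrl /=; apply: ler_sum => zy _.
rewrite ler_wpM2l ?mulr_ge0 // -/(marg P x).
have PX_ge0 : 0 <= marg P x by rewrite sumr_ge0.
have [->|PX_neq0] := eqVneq (marg P x) 0.
  by rewrite mul0r sumr_ge0 // => s _; rewrite mulr_ge0.
by rewrite mulrC -ler_pdivlMr ?lt_def ?PX_neq0.
Qed.

Lemma expected_ereal_inf_le_Ecode (h : X -> Sh * Xh -> R) g :
  (forall x zy, 0 <= h x zy) -> (forall s x zy, 0 <= g s x zy) ->
  (forall x zy, h x zy <= (\sum_(s : S) P s x * g s x zy) / marg P x) ->
  (\sum_(x : X) (marg P x)%:E * ereal_inf [set (h x zy)%:E | zy in [set: Sh * Xh]]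
     <= (Ecode g)%:E)%E.
Proof.
move=> h_ge0 g_ge0 h_le.
pose m x := fine (ereal_inf [set (h x zy)%:E | zy in [set: Sh * Xh]]).
have inf_EFin x : ereal_inf [set (h x zy)%:E | zy in [set: Sh * Xh]] = (m x)%:E.
  have /card_gt0P[u _] : (0 < #|'I_M|)%N := stochastic_card_gt0 x W_st.
  have /card_gt0P[zy _] : (0 < #|{: Sh * Xh}|)%N := stochastic_card_gt0 u D_st.
  by rewrite fineK // (ereal_inf_EFin_image_fin_num (h_ge0 x) zy).
rewrite (eq_bigr (fun x : X => (marg P x * m x)%:E)) => [|x _]; last first.
  by rewrite inf_EFin.
rewrite sumEFin lee_fin; apply: sum_marg_le_Ecode => // x zy.
exact: le_trans (fine_ereal_inf_EFin_image_le (h_ge0 x) zy) (h_le x zy).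
Qed.

Lemma Ecode_density_le (Q : Sh * Xh -> X -> R) (k : R) :
  stochastic Q -> 0 < k ->
  Ecode (fun _ x zy => if M%:R * k * marg P x <= Q zy x then 1 else 0) <= k^-1.
Proof.
have [[W_ge0 W1] [D_ge0 D1]] := (W_st, D_st).
move=> [Q_ge0 Q1] k_gt0.
have [M0|M_gt0] := posnP M.
  rewrite /Ecode big1 ?invr_ge0 ?ltW // => s _; rewrite big1 // => x _.
  by rewrite big1 // => u; have := ltn_ord u; rewrite {2}M0.
pose c := M%:R * k; have c_gt0 : 0 < c by rewrite mulr_gt0 ?ltr0n.
rewrite EcodeE; apply: (@le_trans _ _ (\sum_(x : X) \sum_(u : 'I_M)
                           \sum_(zy : Sh * Xh) D u zy * (Q zy x / c))).
  apply: ler_sum => x _; apply: ler_sum => u _; apply: ler_sum => zy _.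
  have W_le1 : W x u <= 1 by rewrite -(W1 x) (bigD1 u) //= lerDl sumr_ge0.
  have PX_le : \sum_(s : S) P s x * (if c * marg P x <= Q zy x then 1 else 0)
               <= Q zy x / c.
    rewrite -big_distrl /= -/(marg P x); case: ifP => [|_].
      by rewrite mulr1 ler_pdivlMr // mulrC.
    by rewrite mulr0 divr_ge0 // ltW.
  apply: le_trans (ler_wpM2l _ PX_le) _; first by rewrite mulr_ge0.
  by rewrite -mulrA ler_piMl // mulr_ge0 // divr_ge0 // ltW.
rewrite exchange_big /= (eq_bigr (fun _ => c^-1)) => [|u _].
  rewrite sumr_const card_ord -mulr_natr /c invfM mulrAC mulVf ?mul1r //.
  by rewrite pnatr_eq0 -lt0n.
rewrite exchange_big /= (eq_bigr (fun zy => D u zy / c)) => [|zy _].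
  by rewrite -big_distrl /= D1 mul1r.
by rewrite -big_distrr /= -big_distrl /= Q1 mul1r.
Qed.

End CodeExpectation.

Unset Implicit Arguments.

Theorem corollary1 (R : realType) (S X Sh Xh : finType) (b : R)
  (P : S -> X -> R) (dS : S -> Sh -> R) (dX : X -> Xh -> R)
  (M : nat) (ds dx eps : R) (W : X -> 'I_M -> R) (D : 'I_M -> Sh * Xh -> R) :
  1 < b ->
  is_dist2 P ->
  (forall s zs, 0 <= dS s zs) -> (forall x zx, 0 <= dX x zx) ->
  0 <= ds -> 0 <= dx ->
  is_code P dS dX M ds dx eps W D ->
  forall (Q : Sh * Xh -> X -> R), stochastic Q ->
  (forall zy x, marg P x = 0 -> Q zy x = 0) ->
  forall gamma : R, 0 <= gamma ->
  (eps%:E >=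
     (\sum_(x : X) (marg P x)%:E *
        ereal_inf [set (condprob b P dS dX M ds dx Q gamma x zy.1 zy.2)%:E
                  | zy in [set: Sh * Xh]])
     - (b `^ (- gamma))%:E)%E.
Proof.
move=> b_gt1 [P_ge0 _] _ _ _ _ [W_st [D_st err_le]] Q Q_st _ gamma _.
pose info s x (zy : Sh * Xh) : R :=
  if (gamma%:E <= finfo b P dS dX M ds dx Q s x zy.1 zy.2)%E then 1 else 0.
pose excess s x (zy : Sh * Xh) : R :=
  if (ds < dS s zy.1) || (dx < dX x zy.2) then 1 else 0.
pose dense x (zy : Sh * Xh) : R :=
  if M%:R * b `^ gamma * marg P x <= Q zy x then 1 else 0.
have info_le s x zy : info s x zy <= excess s x zy + dense x zy.
  case: zy => z y; apply: ind_le_indD; apply: finfo_ge_excess_or_density => //.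
  - by rewrite -[M]card_ord (stochastic_card_gt0 x W_st).
  - exact: sumr_ge0.
have info_bound : Ecode P W D info <= eps + b `^ (- gamma).
  apply: le_trans (ler_Ecode P_ge0 W_st D_st info_le) _.
  rewrite EcodeD powRN lerD // Ecode_density_le //.
  by rewrite powR_gt0 // (lt_trans ltr01 b_gt1).
apply: le_trans (leeB (expected_ereal_inf_le_Ecode P_ge0 W_st D_st
                         (g := info) _ _ _) (lexx _)) _.
- by move=> x zy; exact: condprob_ge0.
- by move=> s x zy; rewrite /info; case: ifP.
- by [].
by rewrite -EFinB lee_fin lerBlDr.
Qed.
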